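(* Let $\Phi:\{0,1\}^n\to\{0,1\}^n$, $\mu\in\{0,1\}^n$ and $\rho\in P_n$. Then: a) $\overline{W}[\Phi^\rho(\mu,\cdot)]$ is p-invariant; b) if $\underline{W}[\Phi^\rho(\mu,\cdot)]\neq\emptyset$, then $\underline{W}[\Phi^\rho(\mu,\cdot)]$ is n-invariant; c) if $\underline{W}[\omega_\rho(\mu)]\neq\emptyset$, then $\underline{W}[\omega_\rho(\mu)]$ is n-invariant.
   Context: Let $\mathbf{B}=\{0,1\}$ (discrete topology), $n\ge1$, $\Phi:\mathbf{B}^n\to\mathbf{B}^n$. For $\nu\in\mathbf{B}^n$: $\Phi^\nu_i(\mu)=\mu_i$ if $\nu_i=0$, $=\Phi_i(\mu)$ if $\nu_i=1$; $\Phi^{\alpha^0\dots\alpha^k}=\Phi^{\alpha^k}\circ\cdots\circ\Phi^{\alpha^0}$. A sequence $(\alpha^k)_{k\in\mathbf{N}}$ in $\mathbf{B}^n$ is progressive if each $\{k:\alpha^k_i=1\}$ is infinite. $Seq$ = strictly increasing real sequences unbounded above. $P_n$ = functions $\rho:\mathbf{R}\to\mathbf{B}^n$ with $\rho(t_k)=\alpha^k$, $\rho(t)=0$ for $t\notin\{t_k\}$, $\alpha$ progressive, $(t_k)\in Seq$. Orbit: $\Phi^\rho(\mu,t)=\mu$ for $t<t_0$, $=\Phi^{\alpha^0\dots\alpha^k}(\mu)$ for $t\in[t_k,t_{k+1})$; $Or_\rho(\mu)=\{\Phi^\rho(\mu,t):t\in\mathbf{R}\}$. $\omega_\rho(\mu)=\{\mu':\exists(s_k)\in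 Seq,\ \Phi^\rho(\mu,s_k)=\mu'$ for all large $k\}$. Basins: $\overline{W}[\Phi^\rho(\mu,\cdot)]=\{\mu':\exists\rho'\in P_n,\exists t',\forall t\ge t',\ \Phi^{\rho'}(\mu',t)=\Phi^\rho(\mu,t)\}$, $\underline{W}[\Phi^\rho(\mu,\cdot)]=\{\mu':\forall\rho'\in P_n,\exists t',\forall t\ge t',\ \Phi^{\rho'}(\mu',t)=\Phi^\rho(\mu,t)\}$, $\underline{W}[\omega_\rho(\mu)]=\{\mu':\forall\rho'\in P_n,\ \omega_{\rho'}(\mu')=\omega_\rho(\mu)\}$. A nonempty set $A\subset\mathbf{B}^n$ is p-invariant if for every $\mu\in A$ there is $\rho\in P_n$ with $Or_\rho(\mu)\subset A$, and n-invariant if for every $\mu\in A$ and every $\rho\in P_n$, $Or_\rho(\mu)\subset A$. *)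

From Stdlib Require Import Reals ClassicalEpsilon.
From mathcomp Require Import all_boot.

Set Implicit Arguments.
Unset Strict Implicit.
Unset Printing Implicit Defensive.

Definition vec (n : nat) := {ffun 'I_n -> bool}.

Definition zerov (n : nat) : vec n := [ffun _ => false].

Definition Phi_nu (n : nat) (Phi : vec n -> vec n) (nu : vec n) (mu : vec n)
  : vec n := [ffun i => if nu i then Phi mu i else mu i].

Fixpoint Phi_seq (n : nat) (Phi : vec n -> vec n) (alpha : nat -> vec n)
  (k : nat) (mu : vec n) : vec n :=
  match k with
  | 0 => Phi_nu Phi (alpha 0) mu
  | S k' => Phi_nu Phi (alpha (S k')) (Phi_seq Phi alpha k' mu)
  end.

Definition progressive (n : nat) (alpha : nat -> vec n) : Prop :=
  forall (i : 'I_n) (k : nat), exists k', (k <= k')%N /\ alpha k' i = true.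

Definition Seq (t : nat -> R) : Prop :=
  (forall k, Rlt (t k) (t (S k))) /\ (forall M : R, exists k, Rlt M (t k)).

(* An element rho of P_n is given by its data (alpha, t): rho(t_k) = alpha^k,
   rho(s) = 0 for s not in {t_k}.  inP alpha t says the data is admissible. *)
Definition inP (n : nat) (alpha : nat -> vec n) (t : nat -> R) : Prop :=
  progressive alpha /\ Seq t.

Definition rho_of (n : nat) (alpha : nat -> vec n) (t : nat -> R) (s : R)
  : vec n :=
  match excluded_middle_informative (exists k, t k = s) with
  | left H => alpha (proj1_sig (constructive_indefinite_description _ H))
  | right _ => zerov n
  end.

(* the orbit Phi^rho(mu, s): mu for s < t_0, Phi^{alpha^0..alpha^k}(mu) for
   s in [t_k, t_{k+1}) *)
Definition orbit (n : nat) (Phi : vec n -> vec n) (alpha : nat -> vec n)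
  (t : nat -> R) (mu : vec n) (s : R) : vec n :=
  if Rlt_dec s (t 0) then mu
  else Phi_seq Phi alpha
         (epsilon (inhabits 0%N) (fun k => Rle (t k) s /\ Rlt s (t (S k)))) mu.

Definition Or (n : nat) (Phi : vec n -> vec n) (alpha : nat -> vec n)
  (t : nat -> R) (mu : vec n) (nu : vec n) : Prop :=
  exists s : R, orbit Phi alpha t mu s = nu.

Definition omega (n : nat) (Phi : vec n -> vec n) (alpha : nat -> vec n)
  (t : nat -> R) (mu : vec n) (mu' : vec n) : Prop :=
  exists s : nat -> R, Seq s /\
    exists K, forall k, (K <= k)%N -> orbit Phi alpha t mu (s k) = mu'.

Definition W_over (n : nat) (Phi : vec n -> vec n) (alpha : nat -> vec n)
  (t : nat -> R) (mu : vec n) (mu' : vec n) : Prop :=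
  exists (alpha' : nat -> vec n) (t' : nat -> R), inP alpha' t' /\
    exists s0 : R, forall s : R, Rle s0 s ->
      orbit Phi alpha' t' mu' s = orbit Phi alpha t mu s.

Definition W_under (n : nat) (Phi : vec n -> vec n) (alpha : nat -> vec n)
  (t : nat -> R) (mu : vec n) (mu' : vec n) : Prop :=
  forall (alpha' : nat -> vec n) (t' : nat -> R), inP alpha' t' ->
    exists s0 : R, forall s : R, Rle s0 s ->
      orbit Phi alpha' t' mu' s = orbit Phi alpha t mu s.

Definition W_under_omega (n : nat) (Phi : vec n -> vec n)
  (alpha : nat -> vec n) (t : nat -> R) (mu : vec n) (mu' : vec n) : Prop :=
  forall (alpha' : nat -> vec n) (t' : nat -> R), inP alpha' t' ->
    forall nu, omega Phi alpha' t' mu' nu <-> omega Phi alpha t mu nu.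

Definition p_invariant (n : nat) (Phi : vec n -> vec n) (A : vec n -> Prop)
  : Prop :=
  (exists mu, A mu) /\
  forall mu, A mu -> exists (alpha : nat -> vec n) (t : nat -> R),
    inP alpha t /\ forall nu, Or Phi alpha t mu nu -> A nu.

Definition n_invariant (n : nat) (Phi : vec n -> vec n) (A : vec n -> Prop)
  : Prop :=
  (exists mu, A mu) /\
  forall mu, A mu -> forall (alpha : nat -> vec n) (t : nat -> R),
    inP alpha t -> forall nu, Or Phi alpha t mu nu -> A nu.

From Stdlib Require Import Reals Lra ClassicalEpsilon.
From mathcomp Require Import all_boot zify.

Set Implicit Arguments.
Unset Strict Implicit.
Unset Printing Implicit Defensive.

Local Open Scope R_scope.

(* Two facts about orbits give all three parts. The tail of the switching data
   after any time is admissible and, started at the state reached at that time,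
   yields an orbit that eventually coincides with the original one. Conversely,
   an orbit started at a state reached from [mu] is eventually an orbit of [mu]:
   concatenate the two switching data, raising the second switching times above
   the junction, which alters only finitely many of them. Basins and
   omega-limit sets only depend on orbits up to eventual equality. *)

Section IncreasingTimes.

Variable t : nat -> R.
Hypothesis t_incr : forall k, t k < t k.+1.

Lemma increasing_lt i j : (i < j)%N -> t i < t j.
Proof.
elim: j => [|j IHj] // lt_ij.
have [<-|lt_ij'] : i = j \/ (i < j)%N by lia.
  exact: t_incr.
have := IHj lt_ij'; have := t_incr j; lra.
Qed.

Lemma increasing_le i j : (i <= j)%N -> t i <= t j.
Proof.
move=> le_ij; have [->|lt_ij] : i = j \/ (i < j)%N by lia.
  lra.
have := increasing_lt lt_ij; lra.
Qed.

Lemma interval_index_unique k k' s :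
  t k <= s < t k.+1 -> t k' <= s < t k'.+1 -> k = k'.
Proof.
move=> Hk Hk'; have [lt_kk'|[//|lt_k'k]] : (k < k')%N \/ k = k' \/ (k' < k)%N.
- lia.
- have := increasing_le lt_kk'; lra.
- have := increasing_le lt_k'k; lra.
Qed.

End IncreasingTimes.

Lemma interval_index_exists t s : Seq t -> t 0%N <= s -> exists k, t k <= s < t k.+1.
Proof.
move=> [_ t_unbounded] t0s; have [K ltsK] := t_unbounded s.
elim: K ltsK => [|K IHK] ltsK; first lra.
case: (Rle_dec (t K) s) => HK; first by exists K; lra.
apply: IHK; lra.
Qed.

Definition tail_after (T : Type) (k : nat) (f : nat -> T) (j : nat) : T :=
  f (k + j.+1)%N.

Definition splice (T : Type) (k : nat) (f g : nat -> T) (i : nat) : T :=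
  if (i <= k)%N then f i else g (i - k.+1)%N.

Lemma splice_head T k (f g : nat -> T) i : (i <= k)%N -> splice k f g i = f i.
Proof. by rewrite /splice => ->. Qed.

Lemma splice_tail T k (f g : nat -> T) j : tail_after k (splice k f g) j = g j.
Proof.
rewrite /tail_after /splice; have -> : (k + j.+1 <= k)%N = false by lia.
by have -> : (k + j.+1 - k.+1 = j)%N by lia.
Qed.

Lemma Seq_tail_after t k : Seq t -> Seq (tail_after k t).
Proof.
move=> [t_incr t_unbounded]; split=> [j|M].
  by rewrite /tail_after (addnS k j.+1); apply: t_incr.
have [K ltMK] := t_unbounded M; exists K.
have le_K : (K <= k + K.+1)%N by lia.
have := increasing_le t_incr le_K; rewrite /tail_after; lra.
Qed.

Definition ramp (D : R) (j : nat) : R := D + 1 - / (INR j + 2).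

Lemma ramp_increasing D j : ramp D j < ramp D j.+1.
Proof.
rewrite /ramp S_INR; have := pos_INR j => Hj.
have : / (INR j + 1 + 2) < / (INR j + 2) by apply: Rinv_lt_contravar; nra.
lra.
Qed.

Lemma ramp_bounds D j : D < ramp D j < D + 1.
Proof.
rewrite /ramp; have := pos_INR j => Hj.
have : 0 < / (INR j + 2) by apply: Rinv_0_lt_compat; lra.
have : / (INR j + 2) < 1 by rewrite -Rinv_1; apply: Rinv_lt_contravar; lra.
lra.
Qed.

(* Taking the maximum with [ramp D] pushes an unbounded increasing sequence above
   [D] while changing only finitely many of its terms. *)
Definition raised_times (t : nat -> R) (D : R) (j : nat) : R :=
  Rmax (t j) (ramp D j).

Lemma raised_times_eventually t D :
  Seq t -> exists j0, forall j, (j0 <= j)%N -> raised_times t D j = t j.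
Proof.
move=> [t_incr t_unbounded]; have [j0 Hj0] := t_unbounded (D + 1).
exists j0 => j le_j0j; apply: Rmax_left.
have := increasing_le t_incr le_j0j; have := ramp_bounds D j; lra.
Qed.

Lemma Seq_splice_raised t t2 k D :
  Seq t -> Seq t2 -> t k <= D -> Seq (splice k t (raised_times t2 D)).
Proof.
move=> [t_incr _] [t2_incr t2_unbounded] le_tkD; split=> [i|M].
  rewrite /splice /raised_times.
  have [lt_ik|[lt_ki|->]] : (i < k)%N \/ (k < i)%N \/ i = k by lia.
  - by rewrite ltnW // lt_ik; apply: t_incr.
  - have -> : (i <= k)%N = false by lia.
    have -> : (i.+1 <= k)%N = false by lia.
    have -> : (i.+1 - k.+1 = (i - k.+1).+1)%N by lia.
    rewrite /Rmax; have := t2_incr (i - k.+1)%N; have := ramp_increasing D (i - k.+1)%N.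
    by do 2 case: Rle_dec; lra.
  - rewrite leqnn ltnn subnn; have := ramp_bounds D 0.
    have := Rmax_r (t2 0%N) (ramp D 0); lra.
have [K ltMK] := t2_unbounded M; exists (k + K.+1)%N.
rewrite -/(tail_after _ _ _) splice_tail; have := Rmax_l (t2 K) (ramp D K).
rewrite /raised_times; lra.
Qed.

Section Orbits.

Variables (n : nat) (Phi : vec n -> vec n).

Lemma progressive_tail_after (a : nat -> vec n) k :
  progressive a -> progressive (tail_after k a).
Proof.
move=> a_prog i K; have [k' [le_k' Hk']] := a_prog i (k + K.+1)%N.
exists (k' - k.+1)%N; split; first lia.
by rewrite /tail_after; have -> : (k + (k' - k.+1).+1 = k')%N by lia.
Qed.

Lemma progressive_splice (a b : nat -> vec n) k :
  progressive b -> progressive (splice k a b).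
Proof.
move=> b_prog i K; have [k' [le_k' Hk']] := b_prog i K.
by exists (k + k'.+1)%N; split; [lia | rewrite -/(tail_after _ _ _) splice_tail].
Qed.

Lemma Phi_seq_eq (a b : nat -> vec n) k mu :
  (forall i, (i <= k)%N -> a i = b i) -> Phi_seq Phi a k mu = Phi_seq Phi b k mu.
Proof.
elim: k => [|k IHk] eq_ab /=; first by rewrite eq_ab.
by rewrite eq_ab // IHk // => i le_ik; apply: eq_ab; lia.
Qed.

Lemma Phi_seq_add a k j mu :
  Phi_seq Phi a (k + j.+1) mu = Phi_seq Phi (tail_after k a) j (Phi_seq Phi a k mu).
Proof.
elim: j => [|j IHj]; first by rewrite /= /tail_after !addn1.
by rewrite addnS /= IHj /tail_after -addnS.
Qed.

Lemma orbit_before a t mu s : s < t 0%N -> orbit Phi a t mu s = mu.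
Proof. by rewrite /orbit; case: Rlt_dec. Qed.

Lemma orbit_on_interval a t mu k s :
  (forall k, t k < t k.+1) -> t k <= s < t k.+1 ->
  orbit Phi a t mu s = Phi_seq Phi a k mu.
Proof.
move=> t_incr Hs; rewrite /orbit; case: Rlt_dec => [lt_st0|ge_st0].
  have := increasing_le t_incr (leq0n k); lra.
set P := fun k => _.
have HP : P (epsilon (inhabits 0%N) P) by apply: epsilon_spec; exists k.
by rewrite (interval_index_unique t_incr HP Hs).
Qed.

Lemma orbit_point a t mu s : Seq t ->
  orbit Phi a t mu s = mu \/
  exists k, t k <= s /\ orbit Phi a t mu s = Phi_seq Phi a k mu.
Proof.
move=> t_Seq; case: (Rlt_dec s (t 0%N)) => [lt_st0|le_t0s].
  by left; apply: orbit_before.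
have [k Hk] := interval_index_exists t_Seq (Rnot_lt_le _ _ le_t0s).
by right; exists k; split; [lra | apply: orbit_on_interval => //; case: t_Seq].
Qed.

Definition eventually_eq (f g : R -> vec n) : Prop :=
  exists s0, forall s, s0 <= s -> f s = g s.

Lemma eventually_eq_sym f g : eventually_eq f g -> eventually_eq g f.
Proof. by move=> [s0 Hfg]; exists s0 => s /Hfg. Qed.

Lemma eventually_eq_trans f g h :
  eventually_eq f g -> eventually_eq g h -> eventually_eq f h.
Proof.
move=> [s0 Hfg] [s1 Hgh]; exists (Rmax s0 s1) => s Hs.
rewrite Hfg ?Hgh //; [have := Rmax_r s0 s1 | have := Rmax_l s0 s1]; lra.
Qed.

Lemma orbit_eventually_eq_shift a t mu b u nu k j0 :
  Seq t -> (forall i, u i < u i.+1) ->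
  (forall j, (j0 <= j)%N ->
     u (k + j.+1)%N = t j /\ Phi_seq Phi b (k + j.+1) nu = Phi_seq Phi a j mu) ->
  eventually_eq (orbit Phi b u nu) (orbit Phi a t mu).
Proof.
move=> t_Seq u_incr Hshift; have t_incr := proj1 t_Seq.
exists (t j0) => s le_s.
have [j Hj] := interval_index_exists t_Seq
  (Rle_trans _ _ _ (increasing_le t_incr (leq0n j0)) le_s).
have le_j0j : (j0 <= j)%N.
  case: (leqP j0 j) => // lt_jj0.
  have := increasing_le t_incr lt_jj0; lra.
have [u_j Hj_states] := Hshift j le_j0j.
have [u_j' _] := Hshift j.+1 (leqW le_j0j).
rewrite (orbit_on_interval _ _ t_incr Hj) (orbit_on_interval _ _ (k:=(k + j.+1)%N)) ?Hj_states //.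
by rewrite -addnS u_j u_j'.
Qed.

Lemma orbit_point_suffix a t mu s :
  inP a t -> exists b u, inP b u /\
    eventually_eq (orbit Phi b u (orbit Phi a t mu s)) (orbit Phi a t mu).
Proof.
move=> [a_prog t_Seq].
have [->|[k [_ ->]]] := orbit_point a mu s t_Seq.
  by exists a, t; split; [split | exists 0].
exists (tail_after k a), (tail_after k t); split.
  by split; [apply: progressive_tail_after | apply: Seq_tail_after].
apply: eventually_eq_sym; apply: (orbit_eventually_eq_shift (k:=k) (j0:=0%N)).
- exact: Seq_tail_after.
- exact: (proj1 t_Seq).
- by move=> j _; rewrite Phi_seq_add.
Qed.

Lemma orbit_point_prefix a t mu s a2 t2 :
  inP a t -> inP a2 t2 -> exists c u, inP c u /\
    eventually_eq (orbit Phi c u mu) (orbit Phi a2 t2 (orbit Phi a t mu s)).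
Proof.
move=> [a_prog t_Seq] [a2_prog t2_Seq].
have [->|[k [le_tks ->]]] := orbit_point a mu s t_Seq.
  by exists a2, t2; split; [split | exists 0].
have u_Seq := Seq_splice_raised t_Seq t2_Seq le_tks.
exists (splice k a a2), (splice k t (raised_times t2 s)); split.
  by split; [apply: progressive_splice | ].
have [j0 Hj0] := raised_times_eventually s t2_Seq.
apply: (orbit_eventually_eq_shift (k:=k) (j0:=j0)) => //; first exact: (proj1 u_Seq).
move=> j le_j0j; rewrite -/(tail_after _ _ _) splice_tail Hj0 //; split=> //.
rewrite Phi_seq_add.
have -> : Phi_seq Phi (splice k a a2) k mu = Phi_seq Phi a k mu.
  by apply: Phi_seq_eq => i; apply: splice_head.
by apply: Phi_seq_eq => i _; apply: splice_tail.
Qed.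

Lemma omega_eventually_eq a ta x b tb y :
  eventually_eq (orbit Phi a ta x) (orbit Phi b tb y) ->
  forall nu, omega Phi a ta x nu -> omega Phi b tb y nu.
Proof.
move=> [s0 Hxy] nu [s [[s_incr s_unbounded] [K HK]]].
exists s; split; first by split.
have [K' ltK'] := s_unbounded s0.
exists (maxn K K') => k le_k; rewrite -Hxy; first by apply: HK; lia.
have le_K'k : (K' <= k)%N by lia.
have := increasing_le s_incr le_K'k; lra.
Qed.

Lemma omega_eventually_eq_iff a ta x b tb y :
  eventually_eq (orbit Phi a ta x) (orbit Phi b tb y) ->
  forall nu, omega Phi a ta x nu <-> omega Phi b tb y nu.
Proof.
move=> Hxy nu; split; apply: omega_eventually_eq => //.
exact: eventually_eq_sym.
Qed.

End Orbits.

Theorem theorem52 (n : nat) (Hn : (0 < n)%N) (Phi : vec n -> vec n)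
  (mu : vec n) (alpha : nat -> vec n) (t : nat -> R) (Hrho : inP alpha t) :
  p_invariant Phi (W_over Phi alpha t mu) /\
  ((exists mu', W_under Phi alpha t mu mu') ->
     n_invariant Phi (W_under Phi alpha t mu)) /\
  ((exists mu', W_under_omega Phi alpha t mu mu') ->
     n_invariant Phi (W_under_omega Phi alpha t mu)).
Proof.
split; [split | split].
- by exists mu, alpha, t; split => //; exists 0.
- move=> mu' [a' [t' [Hin Heq]]]; exists a', t'; split => // _ [s <-].
  have [b [u [Hbu Hb]]] := orbit_point_suffix Phi mu' s Hin.
  by exists b, u; split => //; apply: eventually_eq_trans Hb Heq.
- move=> Hne; split => // mu' Hmu' a' t' Hin _ [s <-] a2 t2 Hin2.
  have [c [u [Hcu Hc]]] := orbit_point_prefix Phi mu' s Hin Hin2.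
  exact: eventually_eq_trans (eventually_eq_sym Hc) (Hmu' c u Hcu).
- move=> Hne; split => // mu' Hmu' a' t' Hin _ [s <-] a2 t2 Hin2 nu.
  have [c [u [Hcu Hc]]] := orbit_point_prefix Phi mu' s Hin Hin2.
  by rewrite -(omega_eventually_eq_iff Hc) Hmu'.
Qed.
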